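(* Let $A,B\in\mathcal{F}_2$ be commonly ordered configurations. For any fixed $d\ge d(A,B)$, there is a feasible schedule $M$ from $A$ to $B$ with makespan exactly $d$ in which each robot makes at most one turn.
   Context: Robots are axis-parallel unit squares: a robot at $p$ occupies $p+\boxdot$, $\boxdot=\{q:\|q\|_\infty\le1/2\}$. Distances use the $L_1$ norm $\|p\|=|x(p)|+|y(p)|$. A configuration of two robots is a pair $(p_1,p_2)$ with $\|p_1-p_2\|_\infty\ge 1$; $\mathcal{F}_2$ is their set. A trajectory from $a$ to $b$ over $T=[t_0,t_1]$ is a $1$-Lipschitz (w.r.t. $L_1$) map $m:T\to\mathbb{R}^2$, $m(t_0)=a$, $m(t_1)=b$, whose image is a polygonal chain; a turn is a point of the image where two segments of different orientations meet. A schedule $M=(m_1,m_2)$ over $T$ is feasible if $M(t)\in\mathcal{F}_2$ for all $t$; its makespan is $t_1-t_0$. The diameter is $d(A,B)=\max_i\|a_i-b_i\|$. The four orderings are $\mathcal{F}_2^{\rightarrow}=\{(p_1,p_2)\in\mathcal{F}_2: x(p_1)\ge x(p_2)+1\}$, $\mathcal{F}_2^{\leftarrow}=\{x(p_2)\ge x(p_1)+1\}$, $\mathcal{F}_2^{\uparrow}=\{y(p_1)\ge y(p_2)+1\}$, $\mathcal{F}_2^{\downarrow}=\{y(p_2)\ge y(p_1)+1\}$. Two configurations are commonly ordered if both lie in the same ordering. *)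

From Stdlib Require Import Reals.
Open Scope R_scope.

Definition pt := (R * R)%type.

Definition xc (p : pt) : R := fst p.
Definition yc (p : pt) : R := snd p.

Definition dist1 (p q : pt) : R := Rabs (xc p - xc q) + Rabs (yc p - yc q).
Definition distInf (p q : pt) : R := Rmax (Rabs (xc p - xc q)) (Rabs (yc p - yc q)).

Definition config := (pt * pt)%type.

Definition inF2 (P : config) : Prop := distInf (fst P) (snd P) >= 1.

Definition ordRight (P : config) : Prop := inF2 P /\ xc (fst P) >= xc (snd P) + 1.
Definition ordLeft  (P : config) : Prop := inF2 P /\ xc (snd P) >= xc (fst P) + 1.
Definition ordUp    (P : config) : Prop := inF2 P /\ yc (fst P) >= yc (snd P) + 1.
Definition ordDown  (P : config) : Prop := inF2 P /\ yc (snd P) >= yc (fst P) + 1.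

Definition commonly_ordered (A B : config) : Prop :=
  (ordRight A /\ ordRight B) \/ (ordLeft A /\ ordLeft B) \/
  (ordUp A /\ ordUp B) \/ (ordDown A /\ ordDown B).

Definition diam (A B : config) : R :=
  Rmax (dist1 (fst A) (fst B)) (dist1 (snd A) (snd B)).

Definition seg (p q : pt) (z : pt) : Prop :=
  exists l, 0 <= l <= 1 /\
    z = (xc p + l * (xc q - xc p), yc p + l * (yc q - yc p)).

Definition image (m : R -> pt) (t0 t1 : R) (z : pt) : Prop :=
  exists t, t0 <= t <= t1 /\ m t = z.

(* The image is a polygonal chain with at most one turn: it is the union of
   two segments [p,c] and [c,q] sharing the endpoint c (possibly degenerate). *)
Definition at_most_one_turn (m : R -> pt) (t0 t1 : R) : Prop :=
  exists p c q : pt, forall z, image m t0 t1 z <-> (seg p c z \/ seg c q z).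

Definition lipschitz1 (m : R -> pt) (t0 t1 : R) : Prop :=
  forall s t, t0 <= s <= t1 -> t0 <= t <= t1 -> dist1 (m s) (m t) <= Rabs (s - t).

Definition trajectory (m : R -> pt) (a b : pt) (t0 t1 : R) : Prop :=
  t0 <= t1 /\ m t0 = a /\ m t1 = b /\ lipschitz1 m t0 t1.

Definition feasible (m1 m2 : R -> pt) (t0 t1 : R) : Prop :=
  forall t, t0 <= t <= t1 -> inF2 (m1 t, m2 t).

(* Both robots move along straight segments at constant speed, robot i covering
   [a_i, b_i] in time d.  Then at every time the difference p1 - p2 is the convex
   combination (1 - l)(a1 - a2) + l(b1 - b2), l = t/d.  Each of the four orderings
   is a half-plane condition on p1 - p2 (e.g. x(p1 - p2) >= 1), hence convex, so
   the common ordering of A and B persists during the whole motion.  A straight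
   motion has no turn at all. *)

From Stdlib Require Import Reals Lra.
Open Scope R_scope.

Definition lerp (a b : pt) (l : R) : pt :=
  (xc a + l * (xc b - xc a), yc a + l * (yc b - yc a)).

Lemma seg_lerp (a b z : pt) :
  seg a b z <-> exists l, 0 <= l <= 1 /\ z = lerp a b l.
Proof. reflexivity. Qed.

Lemma lerp0 (a b : pt) : lerp a b 0 = a.
Proof. destruct a; unfold lerp, xc, yc; simpl; f_equal; ring. Qed.

Lemma lerp1 (a b : pt) : lerp a b 1 = b.
Proof. destruct b; unfold lerp, xc, yc; simpl; f_equal; ring. Qed.

Lemma lerp_same (a : pt) (l : R) : lerp a a l = a.
Proof. destruct a; unfold lerp, xc, yc; simpl; f_equal; ring. Qed.

Lemma dist1_ge0 (a b : pt) : 0 <= dist1 a b.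
Proof.
  unfold dist1.
  pose proof (Rabs_pos (xc a - xc b)); pose proof (Rabs_pos (yc a - yc b)); lra.
Qed.

Lemma dist1_le0_eq (a b : pt) : dist1 a b <= 0 -> a = b.
Proof.
  destruct a as [ax ay], b as [bx by']; unfold dist1, xc, yc; simpl; intros H.
  pose proof (Rabs_pos (ax - bx)); pose proof (Rabs_pos (ay - by')).
  pose proof (Rle_abs (ax - bx)); pose proof (Rle_abs (ay - by')).
  pose proof (Rle_abs (- (ax - bx))); pose proof (Rle_abs (- (ay - by'))).
  rewrite Rabs_Ropp in *; f_equal; lra.
Qed.

Lemma dist1_lerp (a b : pt) (l l' : R) :
  dist1 (lerp a b l) (lerp a b l') = Rabs (l - l') * dist1 a b.
Proof.
  unfold dist1, lerp, xc, yc; simpl.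
  replace (fst a + l * (fst b - fst a) - (fst a + l' * (fst b - fst a)))
    with ((l' - l) * (fst a - fst b)) by ring.
  replace (snd a + l * (snd b - snd a) - (snd a + l' * (snd b - snd a)))
    with ((l' - l) * (snd a - snd b)) by ring.
  rewrite !Rabs_mult, (Rabs_minus_sym l'); ring.
Qed.

Lemma xc_lerp_sub (a1 b1 a2 b2 : pt) (l : R) :
  xc (lerp a1 b1 l) - xc (lerp a2 b2 l)
  = (1 - l) * (xc a1 - xc a2) + l * (xc b1 - xc b2).
Proof. unfold lerp, xc; simpl; ring. Qed.

Lemma yc_lerp_sub (a1 b1 a2 b2 : pt) (l : R) :
  yc (lerp a1 b1 l) - yc (lerp a2 b2 l)
  = (1 - l) * (yc a1 - yc a2) + l * (yc b1 - yc b2).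
Proof. unfold lerp, yc; simpl; ring. Qed.

Lemma convex_comb_ge (c u v l : R) :
  0 <= l <= 1 -> u >= c -> v >= c -> (1 - l) * u + l * v >= c.
Proof. intros Hl Hu Hv; nra. Qed.

Lemma inF2_of_xgap (p q : pt) : xc p - xc q >= 1 -> inF2 (p, q).
Proof.
  intros H; unfold inF2, distInf; simpl.
  pose proof (Rle_abs (xc p - xc q)).
  pose proof (Rmax_l (Rabs (xc p - xc q)) (Rabs (yc p - yc q))).
  lra.
Qed.

Lemma inF2_of_ygap (p q : pt) : yc p - yc q >= 1 -> inF2 (p, q).
Proof.
  intros H; unfold inF2, distInf; simpl.
  pose proof (Rle_abs (yc p - yc q)).
  pose proof (Rmax_r (Rabs (xc p - xc q)) (Rabs (yc p - yc q))).
  lra.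
Qed.

Lemma inF2_sym (p q : pt) : inF2 (q, p) -> inF2 (p, q).
Proof.
  unfold inF2, distInf; simpl.
  rewrite (Rabs_minus_sym (xc p)), (Rabs_minus_sym (yc p)); auto.
Qed.

Lemma commonly_ordered_lerp (a1 a2 b1 b2 : pt) (l : R) :
  commonly_ordered (a1, a2) (b1, b2) -> 0 <= l <= 1 ->
  inF2 (lerp a1 b1 l, lerp a2 b2 l).
Proof.
  unfold commonly_ordered, ordRight, ordLeft, ordUp, ordDown; simpl.
  intros [[[_ Ha] [_ Hb]] | [[[_ Ha] [_ Hb]] | [[[_ Ha] [_ Hb]] | [[_ Ha] [_ Hb]]]]] Hl.
  - apply inF2_of_xgap; rewrite xc_lerp_sub; apply convex_comb_ge; lra.
  - apply inF2_sym, inF2_of_xgap; rewrite xc_lerp_sub; apply convex_comb_ge; lra.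
  - apply inF2_of_ygap; rewrite yc_lerp_sub; apply convex_comb_ge; lra.
  - apply inF2_sym, inF2_of_ygap; rewrite yc_lerp_sub; apply convex_comb_ge; lra.
Qed.

(* With Rocq's convention [/ 0 = 0], for [d = 0] this is the constant motion at [a]. *)
Definition straight (a b : pt) (d t : R) : pt := lerp a b (t / d).

Lemma div_in_unit (t d : R) : 0 <= t <= d -> 0 <= t / d <= 1.
Proof.
  intros Ht; destruct (Req_dec d 0) as [-> | Hd].
  - unfold Rdiv; rewrite Rinv_0, Rmult_0_r; lra.
  - split.
    + apply Rle_mult_inv_pos; lra.
    + apply (Rmult_le_reg_r d); [lra |]; field_simplify; lra.
Qed.

Lemma div_sub_scaled_le (s t d D : R) :
  0 <= D <= d -> Rabs (s / d - t / d) * D <= Rabs (s - t).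
Proof.
  intros HD; destruct (Req_dec d 0) as [-> | Hd].
  - unfold Rdiv; rewrite Rinv_0, !Rmult_0_r, Rminus_diag, Rabs_R0.
    pose proof (Rabs_pos (s - t)); lra.
  - replace (s / d - t / d) with ((s - t) * / d) by (field; lra).
    rewrite Rabs_mult, Rabs_inv, (Rabs_right d) by lra.
    pose proof (Rabs_pos (s - t)).
    apply (Rmult_le_reg_r d); [lra |].
    replace (Rabs (s - t) * / d * D * d) with (Rabs (s - t) * D) by (field; lra).
    apply Rmult_le_compat_l; lra.
Qed.

Lemma straight_end (a b : pt) (d : R) : dist1 a b <= d -> straight a b d d = b.
Proof.
  intros Hab; unfold straight; destruct (Req_dec d 0) as [-> | Hd].
  - rewrite (dist1_le0_eq a b Hab); apply lerp_same.
  - rewrite Rdiv_diag by exact Hd; apply lerp1.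
Qed.

Lemma straight_trajectory (a b : pt) (d : R) :
  dist1 a b <= d -> trajectory (straight a b d) a b 0 d.
Proof.
  intros Hab; pose proof (dist1_ge0 a b).
  split; [lra |]; split; [| split].
  - unfold straight; rewrite Rdiv_0_l; apply lerp0.
  - now apply straight_end.
  - intros s t _ _; unfold straight; rewrite dist1_lerp.
    apply div_sub_scaled_le; lra.
Qed.

Lemma straight_image (a b : pt) (d : R) (z : pt) :
  dist1 a b <= d -> image (straight a b d) 0 d z <-> seg a b z.
Proof.
  intros Hab; pose proof (dist1_ge0 a b); rewrite seg_lerp; split.
  - intros [t [Ht <-]]; exists (t / d); split; [now apply div_in_unit | reflexivity].
  - intros [l [Hl ->]]; destruct (Req_dec d 0) as [-> | Hd].
    + exists 0; split; [lra |].
      unfold straight; rewrite (dist1_le0_eq a b Hab), !lerp_same; reflexivity.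
    + exists (l * d); split; [nra |].
      unfold straight; f_equal; field; exact Hd.
Qed.

Lemma straight_one_turn (a b : pt) (d : R) :
  dist1 a b <= d -> at_most_one_turn (straight a b d) 0 d.
Proof.
  intros Hab; exists a, b, b; intros z; rewrite straight_image by exact Hab.
  split; [now left |].
  intros [Hz | Hz]; [exact Hz |].
  rewrite seg_lerp in Hz; destruct Hz as [l [_ ->]]; rewrite lerp_same.
  rewrite seg_lerp; exists 1; split; [lra | symmetry; apply lerp1].
Qed.

Lemma straight_feasible (a1 a2 b1 b2 : pt) (d : R) :
  commonly_ordered (a1, a2) (b1, b2) ->
  feasible (straight a1 b1 d) (straight a2 b2 d) 0 d.
Proof.
  intros Hco t Ht; apply commonly_ordered_lerp; [exact Hco |].
  now apply div_in_unit.
Qed.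

Theorem lemma3p1 (A B : config) (d : R) :
  inF2 A -> inF2 B -> commonly_ordered A B -> d >= diam A B ->
  exists (m1 m2 : R -> pt) (t0 t1 : R),
    trajectory m1 (fst A) (fst B) t0 t1 /\
    trajectory m2 (snd A) (snd B) t0 t1 /\
    feasible m1 m2 t0 t1 /\
    t1 - t0 = d /\
    at_most_one_turn m1 t0 t1 /\ at_most_one_turn m2 t0 t1.
Proof.
  destruct A as [a1 a2], B as [b1 b2]; unfold diam; simpl.
  intros _ _ Hco Hd.
  assert (H1 : dist1 a1 b1 <= d)
    by (pose proof (Rmax_l (dist1 a1 b1) (dist1 a2 b2)); lra).
  assert (H2 : dist1 a2 b2 <= d)
    by (pose proof (Rmax_r (dist1 a1 b1) (dist1 a2 b2)); lra).
  exists (straight a1 b1 d), (straight a2 b2 d), 0, d.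
  split; [now apply straight_trajectory |].
  split; [now apply straight_trajectory |].
  split; [now apply straight_feasible |].
  split; [ring |].
  split; now apply straight_one_turn.
Qed.
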